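(* Let $\lambda>1$, $s'\in(0,1]$, $r\in\mathbb{R}$, $a=r+\ln s'$, and $0<b\le\frac{\lambda-1}{\lambda}e^{1/(\lambda-1)}-1$ with $(\lambda-1)[1-\ln(\lambda-1)+\ln(b+1)]\le a\le\lambda-(\lambda-1)\ln\lambda$. Let $x^*$ be the smallest positive solution of $x=x^\lambda e^{a-(b+1)x}$. For the system $x_{n+1}=s'y_n$, $y_{n+1}=x_n^{\lambda}e^{r-bx_{n+1}-x_n}$ ($n\ge0$) on $[0,\infty)^2$, let $E$ be the set of initial points $(x_0,y_0)\in[0,\infty)^2$ whose orbit converges to $(0,0)$, and let $E_0$ be the connected component of $E$ containing $(0,0)$. Then $E_0\subsetneq[0,x^* )\times[0,x^*/s')$. *)

From Stdlib Require Import Reals.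
Open Scope R_scope.

Definition rpow (x lam : R) : R := if Req_EM_T x 0 then 0 else Rpower x lam.

Definition F (lam s' r b : R) (p : R * R) : R * R :=
  let (x, y) := p in
  (s' * y, rpow x lam * exp (r - b * (s' * y) - x)).

Definition orbit (lam s' r b : R) (p : R * R) (n : nat) : R * R :=
  Nat.iter n (F lam s' r b) p.

Definition basinE (lam s' r b : R) (p : R * R) : Prop :=
  0 <= fst p /\ 0 <= snd p /\
  Un_cv (fun n => fst (orbit lam s' r b p n)) 0 /\
  Un_cv (fun n => snd (orbit lam s' r b p n)) 0.

Definition open2 (U : R * R -> Prop) : Prop :=
  forall z, U z -> exists eps, 0 < eps /\
    forall w, Rabs (fst w - fst z) < eps -> Rabs (snd w - snd z) < eps -> U w.

Definition connected2 (S : R * R -> Prop) : Prop :=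
  forall U V, open2 U -> open2 V ->
    (forall z, S z -> U z \/ V z) ->
    (forall z, ~ (S z /\ U z /\ V z)) ->
    (forall z, ~ (S z /\ U z)) \/ (forall z, ~ (S z /\ V z)).

Definition component2 (A : R * R -> Prop) (p : R * R) (z : R * R) : Prop :=
  exists C, connected2 C /\ (forall w, C w -> A w) /\ C p /\ C z.

From Stdlib Require Import Reals Lra Lia.
Open Scope R_scope.

(* In the coordinates (x, v) = (x, s' y) the map reads
   (x, v) |-> (v, x^lam e^(a - b v - x)).  Since lam ln x - x increases on
   (0, lam] and is maximal at lam, this map exchanges the rectangles
   [xs, lam] x [0, xs] and [0, xs] x [xs, lam]; their union is a forward
   invariant set bounded away from the origin.  It contains every point of the
   boundary of the box [0, xs] x [0, xs/s'] lying in the closed quadrant, so E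
   misses that boundary and the connected set E0, which contains (0,0), stays
   inside the box.  For strictness, (lam - 1) ln u + a = u has a root
   u in (0, xs) by the intermediate value theorem, and then (0, u/s') is a
   2-periodic point of the box that is not in E. *)

Lemma exp_le_exp (x y : R) : x <= y -> exp x <= exp y.
Proof.
  intros [Hlt | ->]; [now apply Rlt_le, exp_increasing | apply Rle_refl].
Qed.

Lemma exp_le_of_le_ln (x y : R) : 0 < y -> x <= ln y -> exp x <= y.
Proof. intros Hy H. rewrite <- (exp_ln y) by exact Hy. now apply exp_le_exp. Qed.

Lemma le_exp_of_ln_le (x y : R) : 0 < y -> ln y <= x -> y <= exp x.
Proof. intros Hy H. rewrite <- (exp_ln y) by exact Hy. now apply exp_le_exp. Qed.

Lemma ln_le_sub_1 (w : R) : 0 < w -> ln w <= w - 1.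
Proof.
  intros Hw. pose proof (exp_ineq1_le (ln w)) as H.
  rewrite exp_ln in H by exact Hw. lra.
Qed.

Lemma ln_ratio_lower_bound (u v : R) : 0 < u -> 0 < v -> 1 - u / v <= ln v - ln u.
Proof.
  intros Hu Hv.
  pose proof (ln_le_sub_1 (u / v) ltac:(now apply Rdiv_lt_0_compat)) as H.
  unfold Rdiv in *.
  rewrite ln_mult, ln_Rinv in H by (try apply Rinv_0_lt_compat; assumption).
  lra.
Qed.

Lemma lam_ln_sub_le (lam u v : R) :
  0 < u -> u <= v -> v <= lam -> lam * ln u - u <= lam * ln v - v.
Proof.
  intros Hu Huv Hvl.
  pose proof (ln_ratio_lower_bound u v Hu ltac:(lra)) as H.
  assert (Hdiff : v * (1 - u / v) = v - u) by (field; lra).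
  assert (Hnn : 0 <= 1 - u / v).
  { replace (1 - u / v) with ((v - u) * / v) by (field; lra).
    apply Rmult_le_pos; [lra | left; apply Rinv_0_lt_compat; lra]. }
  assert (0 <= (lam - v) * (1 - u / v)) by (apply Rmult_le_pos; lra).
  assert (0 <= lam * (ln v - ln u - (1 - u / v))) by (apply Rmult_le_pos; lra).
  nra.
Qed.

Lemma lam_ln_sub_le_max (lam u : R) :
  0 < u -> 0 < lam -> lam * ln u - u <= lam * ln lam - lam.
Proof.
  intros Hu Hl.
  pose proof (ln_ratio_lower_bound u lam Hu Hl) as H.
  assert (lam * (1 - u / lam) <= lam * (ln lam - ln u)) by (apply Rmult_le_compat_l; lra).
  assert (lam * (1 - u / lam) = lam - u) by (field; lra).
  lra.
Qed.

Lemma rpow_0_l (lam : R) : rpow 0 lam = 0.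
Proof. unfold rpow. destruct (Req_EM_T 0 0); [reflexivity | lra]. Qed.

Lemma rpow_exp_ln (x lam : R) : 0 < x -> rpow x lam = exp (lam * ln x).
Proof. intros Hx. unfold rpow. destruct (Req_EM_T x 0); [lra | reflexivity]. Qed.

Lemma F_0_l (lam s' r b y : R) : F lam s' r b (0, y) = (s' * y, 0).
Proof. unfold F. rewrite rpow_0_l. f_equal. ring. Qed.

Lemma scaled_snd_F (lam s' r b x y : R) : 0 < s' -> 0 < x ->
  s' * snd (F lam s' r b (x, y)) = exp (lam * ln x + (r + ln s') - b * (s' * y) - x).
Proof.
  intros Hs Hx. cbn. rewrite rpow_exp_ln by exact Hx.
  replace (lam * ln x + (r + ln s') - b * (s' * y) - x)
    with (ln s' + (lam * ln x + (r - b * (s' * y) - x))) by ring.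
  rewrite !exp_plus, exp_ln by exact Hs. reflexivity.
Qed.

Lemma orbit_S (lam s' r b : R) (p : R * R) (n : nat) :
  orbit lam s' r b p (S n) = F lam s' r b (orbit lam s' r b p n).
Proof. reflexivity. Qed.

Lemma Un_cv_0_not_frequently_ge (u v : nat -> R) (c d : R) :
  0 < c -> 0 < d -> Un_cv u 0 -> Un_cv v 0 ->
  ~ (forall N, exists n, (N <= n)%nat /\ (c <= u n \/ d <= v n)).
Proof.
  intros Hc Hd Hu Hv Hfreq.
  destruct (Hu c Hc) as [N1 HN1]. destruct (Hv d Hd) as [N2 HN2].
  destruct (Hfreq (max N1 N2)) as [n [Hn Hge]].
  specialize (HN1 n ltac:(lia)). specialize (HN2 n ltac:(lia)).
  unfold R_dist in *. rewrite Rminus_0_r in *.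
  apply Rabs_def2 in HN1. apply Rabs_def2 in HN2. lra.
Qed.

Lemma connected2_sub_open (C U V : R * R -> Prop) (p : R * R) :
  connected2 C -> open2 U -> open2 V ->
  (forall z, C z -> U z \/ V z) -> (forall z, ~ (U z /\ V z)) ->
  C p -> U p -> forall z, C z -> U z.
Proof.
  intros HC HU HV Hcover Hdisj Cp Up z Cz.
  destruct (HC U V HU HV Hcover ltac:(firstorder)) as [HnotU | HnotV].
  - exfalso. exact (HnotU p (conj Cp Up)).
  - destruct (Hcover z Cz) as [Uz | Vz]; [exact Uz |].
    exfalso. exact (HnotV z (conj Cz Vz)).
Qed.

Lemma open2_lower_quadrant (c d : R) : open2 (fun w => fst w < c /\ snd w < d).
Proof.
  intros z [H1 H2]. exists (Rmin (c - fst z) (d - snd z)). split.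
  - apply Rmin_pos; lra.
  - intros w Hw1 Hw2.
    pose proof (Rmin_l (c - fst z) (d - snd z)). pose proof (Rmin_r (c - fst z) (d - snd z)).
    apply Rabs_def2 in Hw1. apply Rabs_def2 in Hw2. lra.
Qed.

Lemma open2_outside_closed_quadrant (c d : R) : open2 (fun w => c < fst w \/ d < snd w).
Proof.
  intros z [H | H].
  - exists (fst z - c). split; [lra |]. intros w Hw _. apply Rabs_def2 in Hw. lra.
  - exists (snd z - d). split; [lra |]. intros w _ Hw. apply Rabs_def2 in Hw. lra.
Qed.

Definition band (lam s' xs : R) (p : R * R) : Prop :=
  (xs <= fst p <= lam /\ 0 <= s' * snd p <= xs) \/
  (0 <= fst p <= xs /\ xs <= s' * snd p <= lam).

Section Band.

Variables lam s' r a b xs : R.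
Hypothesis hlam : 1 < lam.
Hypothesis hs' : 0 < s'.
Hypothesis ha : a = r + ln s'.
Hypothesis hb : 0 < b.
Hypothesis ha_max : a <= lam - (lam - 1) * ln lam.
Hypothesis hxs : 0 < xs.
Hypothesis hxs_lam : xs <= lam.
Hypothesis hxs_fix : (lam - 1) * ln xs + a = (b + 1) * xs.

Lemma F_band (p : R * R) : band lam s' xs p -> band lam s' xs (F lam s' r b p).
Proof.
  destruct p as [x y]. unfold band. cbn [fst snd].
  change (fst (F lam s' r b (x, y))) with (s' * y).
  intros [[Hx [Hy0 Hy]] | [[Hx0 Hx] [Hy0 Hy]]].
  - rewrite scaled_snd_F, <- ha by lra. right. split; [lra |].
    pose proof (lam_ln_sub_le lam xs x hxs (proj1 Hx) (proj2 Hx)).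
    pose proof (lam_ln_sub_le_max lam x ltac:(lra) ltac:(lra)).
    assert (b * (s' * y) <= b * xs) by (apply Rmult_le_compat_l; lra).
    assert (0 <= b * (s' * y)) by (apply Rmult_le_pos; lra).
    split.
    + apply le_exp_of_ln_le; [exact hxs | lra].
    + apply exp_le_of_le_ln; [lra |].
      assert ((lam - 1) * ln lam = lam * ln lam - ln lam) by ring. lra.
  - left. split; [lra |].
    destruct (Req_dec x 0) as [-> | Hx_ne].
    + rewrite F_0_l. cbn. lra.
    + rewrite scaled_snd_F, <- ha by lra.
      pose proof (lam_ln_sub_le lam x xs ltac:(lra) Hx hxs_lam).
      assert (b * xs <= b * (s' * y)) by (apply Rmult_le_compat_l; lra).
      split; [apply Rlt_le, exp_pos |].
      apply exp_le_of_le_ln; [exact hxs | lra].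
Qed.

Lemma orbit_band (p : R * R) (n : nat) :
  band lam s' xs p -> band lam s' xs (orbit lam s' r b p n).
Proof.
  intros Hp. induction n as [| n IH]; [exact Hp |].
  rewrite orbit_S. exact (F_band _ IH).
Qed.

Lemma basin_not_band (p : R * R) : basinE lam s' r b p -> ~ band lam s' xs p.
Proof.
  intros (_ & _ & Hcv1 & Hcv2) Hp.
  apply (Un_cv_0_not_frequently_ge _ _ xs (xs / s') hxs
           ltac:(now apply Rdiv_lt_0_compat) Hcv1 Hcv2).
  intros N. exists N. split; [lia |].
  assert (Hq : s' * (xs / s') = xs) by (field; lra).
  destruct (orbit_band p N Hp) as [[H _] | [_ [H _]]]; [left; lra | right].
  apply (Rmult_le_reg_l s'); lra.
Qed.

Lemma basin_avoids_box_boundary (p : R * R) : basinE lam s' r b p ->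
  (fst p < xs /\ snd p < xs / s') \/ (xs < fst p \/ xs / s' < snd p).
Proof.
  intros Hp. pose proof (basin_not_band p Hp) as Hnb.
  destruct Hp as (Hx & Hy & _).
  assert (Hq : s' * (xs / s') = xs) by (field; lra).
  destruct (Rlt_le_dec xs (fst p)); [right; left; assumption |].
  destruct (Rlt_le_dec (xs / s') (snd p)); [right; right; assumption |].
  left. split.
  - destruct (Req_dec (fst p) xs); [| lra].
    exfalso. apply Hnb. left. split; [lra |]. split; nra.
  - destruct (Req_dec (snd p) (xs / s')) as [Heq |]; [| lra].
    exfalso. apply Hnb. right. rewrite Heq, Hq. lra.
Qed.

End Band.

Lemma fixed_point_ln_eq (lam a b xs : R) : 0 < xs ->
  xs = rpow xs lam * exp (a - (b + 1) * xs) -> (lam - 1) * ln xs + a = (b + 1) * xs.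
Proof.
  intros Hxs Hfix.
  rewrite rpow_exp_ln, <- exp_plus in Hfix by exact Hxs.
  apply (f_equal ln) in Hfix. rewrite ln_exp in Hfix. lra.
Qed.

Lemma fixed_point_lt_lam (lam a b xs : R) : 1 < lam -> 0 < b -> 0 < xs ->
  a <= lam - (lam - 1) * ln lam -> (lam - 1) * ln xs + a = (b + 1) * xs -> xs < lam.
Proof.
  intros Hlam Hb Hxs Ha Hfix.
  pose proof (ln_ratio_lower_bound xs lam Hxs ltac:(lra)) as H.
  assert ((lam - 1) * (1 - xs / lam) <= (lam - 1) * (ln lam - ln xs))
    by (apply Rmult_le_compat_l; lra).
  assert (Hq : xs / lam * lam = xs) by (field; lra).
  assert (Hsum : b * xs + xs / lam <= 1) by nra.
  assert (0 < b * xs) by (apply Rmult_lt_0_compat; lra).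
  apply (Rmult_lt_reg_r (/ lam)); [apply Rinv_0_lt_compat; lra |].
  rewrite Rinv_r by lra. unfold Rdiv in Hsum. lra.
Qed.

Lemma exists_two_cycle_amplitude (lam a xs : R) : 1 < lam -> 0 < xs ->
  xs < (lam - 1) * ln xs + a -> exists u, 0 < u < xs /\ (lam - 1) * ln u + a = u.
Proof.
  intros Hlam Hxs Hgt.
  set (k t := (lam - 1) * t + a - exp t).
  set (t1 := Rmin (ln xs - 1) (- Rabs a / (lam - 1))).
  assert (Ht1 : t1 < ln xs).
  { pose proof (Rmin_l (ln xs - 1) (- Rabs a / (lam - 1))) as Hmin. fold t1 in Hmin. lra. }
  assert (Hk1 : k t1 < 0).
  { pose proof (Rmin_r (ln xs - 1) (- Rabs a / (lam - 1))) as Hmin. fold t1 in Hmin.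
    assert ((lam - 1) * t1 <= (lam - 1) * (- Rabs a / (lam - 1)))
      by (apply Rmult_le_compat_l; lra).
    assert ((lam - 1) * (- Rabs a / (lam - 1)) = - Rabs a) by (field; lra).
    pose proof (Rle_abs a). pose proof (exp_pos t1). unfold k. lra. }
  assert (Hk2 : 0 < k (ln xs)) by (unfold k; rewrite exp_ln by exact Hxs; lra).
  destruct (IVT k t1 (ln xs) ltac:(unfold k; reg) Ht1 Hk1 Hk2) as (t0 & [_ Ht0] & Hk0).
  assert (Ht0_lt : t0 < ln xs) by (destruct Ht0 as [| ->]; [assumption | lra]).
  exists (exp t0). split; [split |].
  - apply exp_pos.
  - rewrite <- (exp_ln xs) by exact Hxs. now apply exp_increasing.
  - unfold k in Hk0. rewrite ln_exp. lra.
Qed.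

Lemma F_two_cycle (lam s' r b u : R) : 0 < s' -> 0 < u ->
  (lam - 1) * ln u + (r + ln s') = u -> F lam s' r b (u, 0) = (0, u / s').
Proof.
  intros Hs Hu Hcycle.
  assert (Hsnd : s' * snd (F lam s' r b (u, 0)) = u).
  { rewrite scaled_snd_F by assumption.
    transitivity (exp (ln u)); [f_equal; lra | exact (exp_ln u Hu)]. }
  apply injective_projections; cbn [fst snd]; [cbn; ring |].
  apply (Rmult_eq_reg_l s'); [| lra]. rewrite Hsnd. field. lra.
Qed.

Lemma two_cycle_not_basin (lam s' r b u : R) : 0 < s' -> 0 < u ->
  (lam - 1) * ln u + (r + ln s') = u -> ~ basinE lam s' r b (0, u / s').
Proof.
  intros Hs Hu Hcycle (_ & _ & Hcv1 & Hcv2).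
  assert (Hodd : forall n, orbit lam s' r b (0, u / s') (S (2 * n)) = (u, 0)).
  { induction n as [| n IH].
    - rewrite orbit_S, Nat.mul_0_r. change (orbit lam s' r b (0, u / s') 0) with (0, u / s').
      rewrite F_0_l. f_equal. field. lra.
    - replace (S (2 * S n)) with (S (S (S (2 * n)))) by lia.
      rewrite 2!orbit_S, IH, F_two_cycle, F_0_l by assumption. f_equal. field. lra. }
  apply (Un_cv_0_not_frequently_ge _ _ u 1 Hu Rlt_0_1 Hcv1 Hcv2).
  intros N. exists (S (2 * N)). split; [lia |].
  left. rewrite Hodd. apply Rle_refl.
Qed.

Theorem mainTheorem12 (lam s' r a b xs : R)
  (hlam : 1 < lam) (hs1 : 0 < s') (hs2 : s' <= 1)
  (ha : a = r + ln s')
  (hb1 : 0 < b) (hb2 : b <= (lam - 1) / lam * exp (1 / (lam - 1)) - 1)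
  (ha1 : (lam - 1) * (1 - ln (lam - 1) + ln (b + 1)) <= a)
  (ha2 : a <= lam - (lam - 1) * ln lam)
  (hxs_pos : 0 < xs)
  (hxs_sol : xs = rpow xs lam * exp (a - (b + 1) * xs))
  (hxs_min : forall x, 0 < x -> x = rpow x lam * exp (a - (b + 1) * x) -> xs <= x) :
  (forall z, component2 (basinE lam s' r b) (0, 0) z ->
     0 <= fst z < xs /\ 0 <= snd z < xs / s') /\
  (exists z, 0 <= fst z < xs /\ 0 <= snd z < xs / s' /\
     ~ component2 (basinE lam s' r b) (0, 0) z).
Proof.
  pose proof (fixed_point_ln_eq lam a b xs hxs_pos hxs_sol) as hxs_ln.
  pose proof (fixed_point_lt_lam lam a b xs hlam hb1 hxs_pos ha2 hxs_ln) as hxs_lam.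
  assert (hxs_s' : 0 < xs / s') by (apply Rdiv_lt_0_compat; lra).
  split.
  - intros z (C & HC & HCE & HC0 & HCz).
    assert (Hcover : forall w, C w ->
              (fst w < xs /\ snd w < xs / s') \/ (xs < fst w \/ xs / s' < snd w)).
    { intros w Cw.
      exact (basin_avoids_box_boundary lam s' r a b xs hlam hs1 ha hb1 ha2 hxs_pos
               (Rlt_le _ _ hxs_lam) hxs_ln w (HCE w Cw)). }
    assert (Hbox : fst z < xs /\ snd z < xs / s').
    { refine (connected2_sub_open C _ _ (0, 0) HC (open2_lower_quadrant xs (xs / s'))
                (open2_outside_closed_quadrant xs (xs / s')) Hcover _ HC0 _ z HCz).
      - intros w [[? ?] [? | ?]]; lra.
      - cbn. lra. }
    destruct (HCE z HCz) as (Hz1 & Hz2 & _). lra.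
  - assert (Hgt : xs < (lam - 1) * ln xs + a)
      by (rewrite hxs_ln; pose proof (Rmult_lt_0_compat b xs hb1 hxs_pos); lra).
    destruct (exists_two_cycle_amplitude lam a xs hlam hxs_pos Hgt) as (u & Hu & Hcycle).
    exists (0, u / s'). cbn [fst snd].
    assert (0 < u / s') by (apply Rdiv_lt_0_compat; lra).
    assert (u / s' < xs / s')
      by (apply Rmult_lt_compat_r; [apply Rinv_0_lt_compat |]; lra).
    split; [lra | split; [lra |]].
    intros (C & _ & HCE & _ & HCz). subst a.
    exact (two_cycle_not_basin lam s' r b u hs1 (proj1 Hu) Hcycle (HCE _ HCz)).
Qed.
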